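(* Fix $p\in(0,1]$ and let $(G_n)$ be a sequence of graphs with $\min_{u\in V}\delta_u=\omega(\log n)$. For each $n$ run the $(1,p,\mathcal B)$-Edge-Majority dynamics (equivalently the $(1,p,\mathcal B)$-Node-Majority dynamics) on $G_n$ from an arbitrary initial configuration $\mathbf X^{(0)}$. Then there exists $T=T(p)$ such that $\Pr(\tau\le T)=1-o(1)$.
   Context: $G_n=(V,E)$, $V=\{1,\dots,n\}$, $N(u)$ neighbourhood, $\delta_u=|N(u)|$, $\mathrm{vol}(S)=\sum_{v\in S}\delta_v$; asymptotics as $n\to\infty$. States in $\{\mathcal R,\mathcal B\}$; $B^{(t)}$ is the set of $\mathcal B$ nodes at round $t$, and $\tau=\inf\{t\ge0:\mathrm{vol}(B^{(t)})/\mathrm{vol}(V)>1/2\}$. $(1,p,\mathcal B)$-Edge-Majority: in each round $t\ge1$ every node $u$ independently picks one neighbour $v$ uniformly at random; with probability $p$ (independently) $u$ takes state $\mathcal B$, and otherwise it copies the state of $v$ at round $t-1$. *)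

From HB Require Import structures.
From mathcomp Require Import all_boot all_order all_algebra.
From mathcomp Require Import all_classical all_reals all_analysis.
Set Implicit Arguments. Unset Strict Implicit. Unset Printing Implicit Defensive.
Import Order.TTheory GRing.Theory Num.Theory.
Local Open Scope ring_scope.

Definition simple_graph (n : nat) (G : rel 'I_n) : Prop :=
  (forall u v, G u v = G v u) /\ (forall u, ~~ G u u).

Definition nbhd n (G : rel 'I_n) (u : 'I_n) : {set 'I_n} := [set v | G u v].
Definition deg n (G : rel 'I_n) (u : 'I_n) : nat := #|nbhd G u|.
Definition vol n (G : rel 'I_n) (S : {set 'I_n}) : nat := (\sum_(v in S) deg G v)%N.

(* configurations: true = state B, false = state R *)
Definition config (n : nat) := {ffun 'I_n -> bool}.
Definition blue n (x : config n) : {set 'I_n} := [set u | x u].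

(* Probability that node u is in state B at round t given configuration x at
   round t-1, for (1,p,B)-Edge-Majority: u picks v in N(u) uniformly at random;
   with prob. p it takes B, otherwise it copies x v.
   Convention for isolated nodes (irrelevant asymptotically): take B w.p. p. *)
Definition probB (R : realType) (p : R) n (G : rel 'I_n) (x : config n) (u : 'I_n) : R :=
  if deg G u == 0%N then p
  else \sum_(v in nbhd G u) ((deg G u)%:R^-1 * (p + (1 - p) * (x v)%:R)).

Definition trans (R : realType) (p : R) n (G : rel 'I_n) (x y : config n) : R :=
  \prod_(u : 'I_n) (if y u then probB p G x u else 1 - probB p G x u).

Definition majB (R : realType) n (G : rel 'I_n) (x : config n) : bool :=
  (1 / 2 : R) < (vol G (blue x))%:R / (vol G [set: 'I_n]%SET)%:R.

(* state at round t of a trajectory w : rounds 1..T (w i = X^(i+1)), X^(0) = x0 *)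
Definition state n (T : nat) (x0 : config n) (w : {ffun 'I_T -> config n}) (t : nat)
  : config n :=
  match t with
  | 0 => x0
  | t'.+1 => odflt x0 (omap w (insub t'))
  end.

Definition prob_tau_le (R : realType) (p : R) n (G : rel 'I_n) (x0 : config n) (T : nat) : R :=
  \sum_(w : {ffun 'I_T -> config n} | [exists t : 'I_T.+1, majB R G (state x0 w t)])
     \prod_(i < T) trans p G (state x0 w i) (state x0 w i.+1).

Definition mindeg_omega_log (R : realType) (G : forall n, rel 'I_n) : Prop :=
  forall M : R, exists N : nat, forall n : nat, (N <= n)%N ->
    forall u : 'I_n, M * ln (n%:R : R) <= (deg (G n) u)%:R.

(* A node ends a round in state B with probability p + (1 - p) * (fraction of its
   neighbours in state B), independently of the others; hence the next blue volume
   has mean p vol V + (1 - p) vol B and variance at most sum_u deg_u^2 / 4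
   <= vol(V)^2 / (4 delta_min), so by Chebyshev it drops below its mean minus
   eps vol V with probability O(1 / delta_min).  Outside these rare events the red
   share of the volume after t rounds is at most (1 - p)^t + t eps; with T chosen
   so that (1 - p)^T <= 1/4 and eps = 1/(8T), the blue share at round T exceeds
   5/8, so tau <= T with probability 1 - O(T^3 / delta_min) = 1 - o(1). *)

From HB Require Import structures.
From mathcomp Require Import all_boot all_order all_algebra.
From mathcomp Require Import all_classical all_reals all_analysis.
From mathcomp Require Import ring lra.
Set Implicit Arguments. Unset Strict Implicit. Unset Printing Implicit Defensive.
Import Order.TTheory GRing.Theory Num.Theory numFieldNormedType.Exports.
Local Open Scope ring_scope.

Lemma ler_sum_subpred (R : numDomainType) (I : finType) (P Q : pred I) (F : I -> R) :
  (forall i, P i -> Q i) -> (forall i, 0 <= F i) ->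
  \sum_(i | P i) F i <= \sum_(i | Q i) F i.
Proof.
move=> PQ F0; rewrite big_mkcond [leRHS]big_mkcond; apply: ler_sum => i _.
by case: ifP => [/PQ -> //|_]; case: ifP.
Qed.

Section ProductBernoulli.
Variables (R : realType) (I : finType).

Definition prod_bern (q : I -> R) (y : {ffun I -> bool}) : R :=
  \prod_i (if y i then q i else 1 - q i).

Lemma sum_ffun_prod (H : I -> bool -> R) :
  \sum_(y : {ffun I -> bool}) \prod_i H i (y i) = \prod_i (H i true + H i false).
Proof. by rewrite -bigA_distr_bigA; apply: eq_bigr => i _; rewrite big_bool. Qed.

Lemma sum_prod_bern q : \sum_y prod_bern q y = 1.
Proof.
rewrite /prod_bern (sum_ffun_prod (fun i b => if b then q i else 1 - q i)).
by rewrite big1 // => i _; rewrite addrC subrK.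
Qed.

Variable q : I -> R.
Hypothesis q01 : forall i, 0 <= q i <= 1.

Lemma prod_bern_ge0 y : 0 <= prod_bern q y.
Proof. by apply: prodr_ge0 => i _; have /andP[? ?] := q01 i; case: (y i); lra. Qed.

Lemma prod_bern_cov (u v : I) :
  \sum_y prod_bern q y * (((y u)%:R - q u) * ((y v)%:R - q v)) =
  if u == v then q u * (1 - q u) else 0.
Proof.
pose H i (b : bool) := (if b then q i else 1 - q i) *
  ((if i == u then b%:R - q i else 1) * (if i == v then b%:R - q i else 1)).
have pick (a : R) (w : I) : \prod_i (if i == w then a else 1) = a.
  by rewrite -big_mkcond big_pred1_eq.
transitivity (\sum_(y : {ffun I -> bool}) \prod_i H i (y i)).
  apply: eq_bigr => y _; rewrite /H !big_split /=.
  rewrite -(pick ((y u)%:R - q u) u) -(pick ((y v)%:R - q v) v).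
  by congr (_ * (_ * _)); apply: eq_bigr => i _; case: eqP => // ->.
rewrite sum_ffun_prod (bigD1 u) //= /H eqxx; case: eqVneq => [<-|_] /=.
  rewrite big1 => [|i /negPf ->]; last by rewrite !mulr1 addrC subrK.
  ring.
by rewrite !mulr1 [X in X * _](_ : _ = 0) ?mul0r //; ring.
Qed.

Lemma prod_bern_variance (w : I -> R) :
  \sum_y prod_bern q y * (\sum_i w i * ((y i)%:R - q i)) ^+ 2 =
  \sum_i w i ^+ 2 * (q i * (1 - q i)).
Proof.
transitivity (\sum_i \sum_j w i * w j *
    \sum_y prod_bern q y * (((y i)%:R - q i) * ((y j)%:R - q j))).
  under [RHS]eq_bigr => i _ do under eq_bigr => j _ do rewrite mulr_sumr.
  under [RHS]eq_bigr => i _ do rewrite exchange_big.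
  rewrite [RHS]exchange_big; apply: eq_bigr => y _ /=.
  rewrite expr2 mulr_suml mulr_sumr; apply: eq_bigr => i _.
  by rewrite mulr_sumr mulr_sumr; apply: eq_bigr => j _; ring.
apply: eq_bigr => i _; rewrite (bigD1 i) //= prod_bern_cov eqxx expr2.
by rewrite big1 ?addr0 // => j ji; rewrite prod_bern_cov eq_sym (negPf ji) mulr0.
Qed.

Lemma prod_bern_lower_tail (w : I -> R) (e : R) : 0 < e ->
  \sum_(y : {ffun I -> bool} | \sum_i w i * ((y i)%:R - q i) < - e) prod_bern q y <=
  (\sum_i w i ^+ 2) / (4 * e ^+ 2).
Proof.
move=> e0; pose S (y : {ffun I -> bool}) := \sum_i w i * ((y i)%:R - q i).
have e20 : 0 < e ^+ 2 by rewrite exprn_gt0.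
have markov_sq : \sum_(y | S y < - e) prod_bern q y <=
    \sum_y prod_bern q y * (S y ^+ 2 / e ^+ 2).
  apply: (@le_trans _ _ (\sum_(y | S y < - e) prod_bern q y * (S y ^+ 2 / e ^+ 2))).
    apply: ler_sum => y Sy; rewrite ler_peMr ?prod_bern_ge0 // ler_pdivlMr // mul1r.
    by rewrite -[S y ^+ 2]sqrrN ler_sqr ?nnegrE; lra.
  apply: ler_sum_subpred => // y.
  by rewrite mulr_ge0 ?prod_bern_ge0 ?divr_ge0 ?sqr_ge0.
apply: (le_trans markov_sq).
under eq_bigr do rewrite mulrA; rewrite -mulr_suml prod_bern_variance.
rewrite [in leRHS]invfM mulrA ler_pM2r ?invr_gt0 // mulr_suml.
apply: ler_sum => i _; rewrite ler_wpM2l ?sqr_ge0 //.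
by rewrite -subr_ge0 (_ : _ - _ = (q i - 2^-1) ^+ 2) ?sqr_ge0 //; field.
Qed.

End ProductBernoulli.

Section GraphVolumes.
Variables (R : realType) (n : nat) (G : rel 'I_n).

Lemma sum_nbhd (F : 'I_n -> R) u :
  \sum_(v in nbhd G u) F v = \sum_v (G u v)%:R * F v.
Proof.
rewrite big_mkcond; apply: eq_bigr => v _; rewrite inE.
by case: (G u v); rewrite ?mul1r ?mul0r.
Qed.

Lemma deg_sum u : (deg G u)%:R = \sum_v (G u v)%:R :> R.
Proof.
rewrite /deg -sum1_card natr_sum sum_nbhd.
by apply: eq_bigr => v _; rewrite mulr1.
Qed.

Lemma vol_blueE (y : config n) :
  (vol G (blue y))%:R = \sum_v (deg G v)%:R * (y v)%:R :> R.
Proof.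
rewrite natr_sum big_mkcond; apply: eq_bigr => v _; rewrite inE.
by case: (y v); rewrite ?mulr1 ?mulr0.
Qed.

Lemma vol_setTE : (vol G [set: 'I_n])%:R = \sum_v (deg G v)%:R :> R.
Proof. by rewrite natr_sum; apply: eq_bigl => v; rewrite inE. Qed.

Variable p : R.
Hypotheses (p_ge0 : 0 <= p) (p_le1 : p <= 1).

Lemma probB_in01 (x : config n) u : 0 <= probB p G x u <= 1.
Proof.
have p01 (b : bool) : 0 <= p + (1 - p) * b%:R <= 1.
  by move: p_ge0 p_le1; case: b; rewrite /= ?mulr1 ?mulr0; lra.
rewrite /probB; case: eqP => [_|/eqP d0]; first by rewrite p_ge0 p_le1.
apply/andP; split.
  by apply: sumr_ge0 => v _; rewrite mulr_ge0 ?invr_ge0 ?ler0n //; case/andP: (p01 (x v)).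
apply: le_trans (_ : \sum_(v in nbhd G u) (deg G u)%:R^-1 <= _).
  by apply: ler_sum => v _; rewrite ler_piMr ?invr_ge0 ?ler0n //; case/andP: (p01 (x v)).
by rewrite sumr_const -[_ *+ #|_|]mulr_natr -/(deg G u) mulVf ?pnatr_eq0.
Qed.

Lemma deg_mul_probB (x : config n) u :
  (deg G u)%:R * probB p G x u = \sum_(v in nbhd G u) (p + (1 - p) * (x v)%:R).
Proof.
rewrite /probB; case: eqP => [d0|/eqP d0].
  by rewrite d0 mul0r big_pred0 // => v; rewrite (card0_eq d0).
rewrite mulr_sumr; apply: eq_bigr => v _.
by rewrite mulrA divff ?mul1r // pnatr_eq0.
Qed.

Hypothesis Gsym : forall u v, G u v = G v u.

Lemma sum_deg_probB (x : config n) :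
  \sum_u (deg G u)%:R * probB p G x u =
  p * (vol G [set: 'I_n])%:R + (1 - p) * (vol G (blue x))%:R.
Proof.
under eq_bigr do rewrite deg_mul_probB sum_nbhd.
rewrite exchange_big vol_setTE vol_blueE !mulr_sumr -big_split /=.
apply: eq_bigr => v _; rewrite -mulr_suml deg_sum.
under eq_bigr do rewrite Gsym.
ring.
Qed.

Variable M : R.
Hypotheses (M_gt0 : 0 < M) (deg_geM : forall u, M <= (deg G u)%:R) (n_gt0 : (0 < n)%N).
Local Notation V := ((vol G [set: 'I_n])%:R : R).

Lemma vol_setT_ge : n%:R * M <= V.
Proof.
rewrite vol_setTE -[n in n%:R]card_ord -sum1_card natr_sum mulr_suml.
by apply: ler_sum => u _; rewrite mul1r.
Qed.

Lemma vol_setT_gt0 : 0 < V.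
Proof. by apply: lt_le_trans vol_setT_ge; rewrite mulr_gt0 ?ltr0n. Qed.

Lemma sum_deg_sqr_le : M * \sum_u (deg G u)%:R ^+ 2 <= V ^+ 2.
Proof.
have sum_sqr_le : \sum_u (deg G u)%:R ^+ 2 <= n%:R * V.
  rewrite vol_setTE mulr_sumr; apply: ler_sum => u _.
  rewrite expr2; apply: ler_wpM2r; first exact: ler0n.
  by rewrite ler_nat /deg -[X in (_ <= X)%N]card_ord max_card.
apply: le_trans (_ : M * (n%:R * V) <= _); first by rewrite ler_pM2l.
by rewrite mulrA expr2 ler_pM2r ?vol_setT_gt0 // mulrC vol_setT_ge.
Qed.

Lemma vol_blue_lower_tail (e : R) (x : config n) : 0 < e ->
  \sum_(y : config n | (vol G (blue y))%:R < p * V + (1 - p) * (vol G (blue x))%:R - e * V)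
    trans p G x y <= (4 * e ^+ 2 * M)^-1.
Proof.
move=> e_gt0; have V_gt0 := vol_setT_gt0.
have dev (y : config n) : (vol G (blue y))%:R - (p * V + (1 - p) * (vol G (blue x))%:R) =
    \sum_u (deg G u)%:R * ((y u)%:R - probB p G x u).
  by rewrite -sum_deg_probB vol_blueE -sumrB; apply: eq_bigr => u _; rewrite mulrBr.
rewrite (eq_bigl (fun y : config n =>
    \sum_u (deg G u)%:R * ((y u)%:R - probB p G x u) < - (e * V))) => [|y]; last first.
  by rewrite -dev; apply/idP/idP; lra.
apply: le_trans (prod_bern_lower_tail (probB_in01 x) _ (mulr_gt0 e_gt0 V_gt0)) _.
rewrite ler_pdivrMr ?mulr_gt0 ?exprn_gt0 //.
rewrite [leRHS](_ : _ = V ^+ 2 / M); last by field; rewrite ?gt_eqF.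
by rewrite ler_pdivlMr // mulrC sum_deg_sqr_le.
Qed.
End GraphVolumes.

Section Trajectories.
Variables (R : realType) (n : nat) (x0 : config n).
Local Notation X := (config n).

Definition snoc_traj T (f : {ffun 'I_T -> X}) (y : X) : {ffun 'I_T.+1 -> X} :=
  [ffun i => if unlift ord_max i is Some j then f j else y].

Lemma sum_traj_snoc T (F : {ffun 'I_T.+1 -> X} -> R) :
  \sum_w F w = \sum_(f : {ffun 'I_T -> X}) \sum_y F (snoc_traj f y).
Proof.
rewrite pair_big /= (reindex (fun fy => snoc_traj fy.1 fy.2)) //=.
exists (fun w => ([ffun j => w (lift ord_max j)], w ord_max)) => [[f y]|w] _ /=.
  by congr (_, _); [apply/ffunP => j; rewrite !ffunE liftK | rewrite ffunE unlift_none].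
by apply/ffunP => i; rewrite ffunE; case: unliftP => [j|] ->; rewrite ?ffunE.
Qed.

Lemma state_val T (w : {ffun 'I_T -> X}) (i : 'I_T) : state x0 w i.+1 = w i.
Proof. by rewrite /= valK. Qed.

Lemma state_snoc T f y t : (t <= T)%N -> state x0 (@snoc_traj T f y) t = state x0 f t.
Proof.
case: t => [//|t] tT; have -> : t = lift ord_max (Ordinal tT) by rewrite lift_max.
by rewrite state_val ffunE liftK lift_max (state_val f (Ordinal tT)).
Qed.

Lemma state_snoc_last T f y : state x0 (@snoc_traj T f y) T.+1 = y.
Proof. by rewrite (state_val _ ord_max) ffunE unlift_none. Qed.

Variable K : X -> X -> R.
Hypotheses (K_ge0 : forall x y, 0 <= K x y) (K_sum1 : forall x, \sum_y K x y = 1).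

Definition traj_weight T (w : {ffun 'I_T -> X}) : R :=
  \prod_(i < T) K (state x0 w i) (state x0 w i.+1).

Lemma traj_weight_ge0 T w : 0 <= @traj_weight T w.
Proof. by apply: prodr_ge0 => i _; apply: K_ge0. Qed.

Lemma traj_weight_snoc T f y :
  traj_weight (@snoc_traj T f y) = traj_weight f * K (state x0 f T) y.
Proof.
rewrite /traj_weight big_ord_recr state_snoc_last state_snoc //.
apply: congr2 => //; apply: eq_bigr => i _; have iT := ltn_ord i.
by rewrite !state_snoc //= ltnW.
Qed.

Lemma sum_traj_weight T : \sum_(w : {ffun 'I_T -> X}) traj_weight w = 1.
Proof.
elim: T => [|T IH].
  rewrite /traj_weight; under eq_bigr do rewrite big_ord0.
  by rewrite sumr_const card_ffun card_ord.
rewrite sum_traj_snoc -[RHS]IH; apply: eq_bigr => f _.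
by under eq_bigr do rewrite traj_weight_snoc; rewrite -mulr_sumr K_sum1 mulr1.
Qed.

Variables (good : nat -> X -> bool) (eta : R).
Hypotheses (good0 : good 0 x0)
  (good_step : forall t x, good t x -> \sum_(y | ~~ good t.+1 y) K x y <= eta).

Definition always_good T (w : {ffun 'I_T -> X}) : bool :=
  \big[andb/true]_(t < T.+1) good t (state x0 w t).

Lemma always_good_snoc T f y :
  always_good (@snoc_traj T f y) = always_good f && good T.+1 y.
Proof.
rewrite /always_good big_ord_recr state_snoc_last; congr (_ && _).
by apply: eq_bigr => i _; have iT := ltn_ord i; rewrite state_snoc.

Qed.

Lemma always_good_mass_ge T :
  1 - T%:R * eta <= \sum_(w | always_good w) @traj_weight T w.
Proof.
have eta_ge0 : 0 <= eta by apply: le_trans (good_step good0); apply: sumr_ge0.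
elim: T => [|T IH].
  rewrite mul0r subr0 -(sum_traj_weight 0) le_eqVlt; apply/orP; left; apply/eqP.
  by apply: eq_bigl => w; rewrite /always_good big_ord1 good0.
set S := \sum_(w | always_good w) _ in IH.
have S_le1 : S <= 1.
  rewrite -(sum_traj_weight T) [leRHS](bigID (@always_good T)) lerDl.
  by apply: sumr_ge0 => w _; apply: traj_weight_ge0.
apply: le_trans (_ : S - eta * S <= _); first by rewrite -natr1; nra.
rewrite big_mkcond sum_traj_snoc /S big_mkcond mulr_sumr -sumrB; apply: ler_sum => f _.
under eq_bigr do rewrite always_good_snoc traj_weight_snoc.
case: ifP => [fgood|_]; last by rewrite mulr0 subrr big1 // => y _; rewrite andFb.
have goodT : good T (state x0 f T).
  by move: fgood; rewrite /always_good big_ord_recr => /andP[].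
have mass_good : 1 - eta <= \sum_(y | good T.+1 y) K (state x0 f T) y.
  have := good_step goodT; have := K_sum1 (state x0 f T).
  by rewrite (bigID (good T.+1)) /=; lra.
rewrite -big_mkcond /= -mulr_sumr; have := traj_weight_ge0 f; nra.
Qed.

End Trajectories.

Section EdgeMajority.
Variables (R : realType) (n : nat) (G : rel 'I_n) (p : R).
Hypotheses (p_gt0 : 0 < p) (p_le1 : p <= 1).
Local Notation V := ((vol G [set: 'I_n])%:R : R).

Lemma trans_ge0 x y : 0 <= trans p G x y.
Proof. exact/prod_bern_ge0/probB_in01/p_le1/ltW. Qed.

Lemma sum_trans x : \sum_y trans p G x y = 1.
Proof. exact: sum_prod_bern. Qed.

Lemma prob_tau_le_le1 x0 T : prob_tau_le p G x0 T <= 1.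
Proof.
rewrite -(sum_traj_weight x0 sum_trans T).
by apply: ler_sum_subpred => // w; apply/traj_weight_ge0/trans_ge0.
Qed.

Variables (M : R) (T : nat).
Hypotheses (Gsym : forall u v, G u v = G v u) (M_gt0 : 0 < M)
  (deg_geM : forall u, M <= (deg G u)%:R) (n_gt0 : (0 < n)%N)
  (T_gt0 : (0 < T)%N) (decayT : (1 - p) ^+ T <= 1 / 4).

Let eps : R := (8 * T%:R)^-1.
(* Upper bound on the red fraction of the volume after t rounds: in expectation a
   round multiplies it by 1 - p, and each round's deviation below the mean costs
   at most eps, except with probability (4 eps^2 M)^-1 (Chebyshev). *)
Let blue_deficit (t : nat) : R := (1 - p) ^+ t + t%:R * eps.
Let good (t : nat) (y : config n) : bool := (1 - blue_deficit t) * V <= (vol G (blue y))%:R.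

Lemma eps_gt0 : 0 < eps.
Proof. by rewrite invr_gt0 mulr_gt0 ?ltr0n. Qed.

Lemma good_step t x : good t x ->
  \sum_(y | ~~ good t.+1 y) trans p G x y <= (4 * eps ^+ 2 * M)^-1.
Proof.
move=> good_x.
apply: le_trans (vol_blue_lower_tail (ltW p_gt0) p_le1 Gsym M_gt0 deg_geM n_gt0 x eps_gt0).
apply: ler_sum_subpred => y; last exact: trans_ge0.
apply: contraNT; rewrite -leNgt => tail_y.
have V_gt0 := vol_setT_gt0 M_gt0 deg_geM n_gt0.
have q_ge0 : 0 <= 1 - p by rewrite subr_ge0.
have := ler_wpM2l q_ge0 good_x.
have : 0 <= p * (t%:R * eps * V) by rewrite !mulr_ge0 ?ler0n // ltW ?eps_gt0.
by move: tail_y; rewrite /good /blue_deficit exprS -natr1; lra.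
Qed.

Lemma prob_tau_le_ge x0 : 1 - 16 * T%:R ^+ 3 / M <= prob_tau_le p G x0 T.
Proof.
have V_gt0 := vol_setT_gt0 M_gt0 deg_geM n_gt0.
have good0 : good 0 x0 by rewrite /good /blue_deficit expr0 mul0r addr0 subrr mul0r ler0n.
have mass_T : T%:R * (4 * eps ^+ 2 * M)^-1 = 16 * T%:R ^+ 3 / M.
  by rewrite /eps; field; rewrite ?gt_eqF ?ltr0n.
rewrite -mass_T; apply: le_trans (always_good_mass_ge trans_ge0 sum_trans good0 good_step T) _.
apply: ler_sum_subpred => w; last exact/traj_weight_ge0/trans_ge0.
rewrite /always_good big_ord_recr /= => /andP[_ goodT].
apply/existsP; exists ord_max; rewrite /majB /= ltr_pdivlMr //.
have Teps : T%:R * eps = 1 / 8 by rewrite /eps; field; rewrite pnatr_eq0 -lt0n.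
have : blue_deficit T <= 3 / 8 by move: decayT; rewrite /blue_deficit Teps; lra.
move: goodT; rewrite /good; nra.
Qed.
End EdgeMajority.

Local Open Scope classical_set_scope.

Lemma exists_pos_expr_le (R : realType) (a e : R) :
  `|a| < 1 -> 0 < e -> exists2 T : nat, (0 < T)%N & a ^+ T <= e.
Proof.
move=> a_lt1 e_gt0; have /cvgrPdist_le/(_ e e_gt0) [N _ hN] := cvg_expr a_lt1.
exists N.+1 => //; apply: le_trans (ler_norm _) _.
by have := hN N.+1 (leqnSn N); rewrite /= sub0r normrN.
Qed.

Lemma mindeg_omega_log_eventually (R : realType) (G : forall n, rel 'I_n) (M : R) :
  mindeg_omega_log R G -> 0 <= M ->
  \forall n \near \oo, (0 < n)%N /\ forall u, M <= (deg (G n) u)%:R.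
Proof.
move=> Gdeg M_ge0; have ln2_gt0 : 0 < ln (2 : R) by rewrite ln_gt0 // ltr1n.
have [N hN] := Gdeg (M / ln 2).
exists (maxn N 2) => // n /=; rewrite geq_max => /andP[Nn n2].
split=> [|u]; first exact: leq_trans n2.
apply: le_trans (hN n Nn u); rewrite -[leLHS](divfK (lt0r_neq0 ln2_gt0)).
apply: ler_wpM2l; first exact: divr_ge0 M_ge0 (ltW ln2_gt0).
by rewrite ler_ln ?posrE ?ltr0n ?ler_nat // ltnW.
Qed.

Theorem proposition6p1 (R : realType) (p : R) (hp0 : 0 < p) (hp1 : p <= 1) :
  exists T : nat,
    forall (G : forall n : nat, rel 'I_n) (X0 : forall n : nat, config n),
      (forall n, simple_graph (G n)) ->
      mindeg_omega_log R G ->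
      prob_tau_le p (G n) (X0 n) T @[n --> \oo] --> (1 : R).
Proof.
have [||T T_gt0 decayT] := @exists_pos_expr_le R (1 - p) (1 / 4).
- by rewrite ger0_norm; lra.
- by [].
exists T => G X0 Gs Gdeg; apply/cvgrPdist_le => e e_gt0.
have M_gt0 : 0 < 16 * T%:R ^+ 3 / e by rewrite !mulr_gt0 ?invr_gt0 ?exprn_gt0 ?ltr0n.
apply: filterS (mindeg_omega_log_eventually Gdeg (ltW M_gt0)) => n [n_gt0 deg_geM].
have lb := prob_tau_le_ge hp0 hp1 (Gs n).1 M_gt0 deg_geM n_gt0 T_gt0 decayT (X0 n).
have ub := prob_tau_le_le1 (G n) hp0 hp1 (X0 n) T.
rewrite divKf ?gt_eqF ?mulr_gt0 ?exprn_gt0 ?ltr0n // in lb.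
by rewrite ger0_norm; lra.
Qed.
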